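(* Let $X$ be a (real or complex) separable infinite-dimensional F-space and $T:X\to X$ a continuous linear operator that is quasi-rigid. Then the set $\mathrm{Rec}(T)$ of recurrent vectors of $T$ contains a dense infinite-dimensional vector subspace of $X$.
   Context: An F-space is a completely metrizable topological vector space. $x$ is recurrent for $T$ if $x\in\overline{\{T^nx:n\geq1\}}$; $\mathrm{Rec}(T)$ is the set of such $x$. $T$ is quasi-rigid if there exist a strictly increasing sequence $(n_k)$ of positive integers and a dense $Y\subset X$ with $T^{n_k}x\to x$ for every $x\in Y$. *)

From HB Require Import structures.
From mathcomp Require Import all_boot all_order all_algebra.
From mathcomp Require Import all_classical all_reals all_analysis.
From mathcomp Require Import complex.
Import Order.TTheory GRing.Theory Num.Theory.
Import numFieldTopology.Exports.

Set Implicit Arguments.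
Unset Strict Implicit.
Unset Printing Implicit Defensive.

Local Open Scope classical_set_scope.
Local Open Scope ring_scope.

Definition RC (R : realType) (b : bool) : numFieldType :=
  if b then (R : numFieldType) else (R[i] : numFieldType).

Definition completely_metrizable (R : realType) (X : topologicalType) : Prop :=
  exists d : X -> X -> R,
    [/\ (forall x y, 0 <= d x y /\ (d x y = 0 <-> x = y)),
        (forall x y, d x y = d y x),
        (forall x y z, d x z <= d x y + d y z),
        (forall A : set X, open A <->
           (forall x, A x -> exists2 e : R, 0 < e & [set y | d x y < e] `<=` A)) &
        (forall u : nat -> X,
           (forall e : R, 0 < e -> exists N : nat,
              forall m n, (N <= m)%N -> (N <= n)%N -> d (u m) (u n) < e) ->
           exists l : X, u @ \oo --> l)].

Definition F_space {R : realType} {b : bool} (X : topologicalLmodType (RC R b)) : Prop :=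
  completely_metrizable R X.

Definition separable (X : topologicalType) : Prop :=
  exists D : set X, countable D /\ dense D.

Definition lin_indep (K : numDomainType) (X : lmodType K) (n : nat)
  (v : 'I_n -> X) : Prop :=
  forall c : 'I_n -> K, \sum_(i < n) c i *: v i = 0 -> forall i, c i = 0.

Definition infinite_dimensional (K : numDomainType) (X : lmodType K) (S : set X) : Prop :=
  forall n : nat, exists v : 'I_n -> X, (forall i, S (v i)) /\ lin_indep v.

Definition vector_subspace (K : numDomainType) (X : lmodType K) (S : set X) : Prop :=
  [/\ S 0, (forall x y, S x -> S y -> S (x + y)) &
      (forall (a : K) x, S x -> S (a *: x))].

Definition recurrent (X : topologicalType) (T : X -> X) (x : X) : Prop :=
  closure [set iter n T x | n in [set n : nat | (1 <= n)%N]] x.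

Definition Rec (X : topologicalType) (T : X -> X) : set X := [set x | recurrent T x].

Definition quasi_rigid (X : topologicalType) (T : X -> X) : Prop :=
  exists (nk : nat -> nat) (Y : set X),
    [/\ (forall k, (0 < nk k)%N), (forall k, (nk k < nk k.+1)%N), dense Y &
        (forall x, Y x -> (fun k => iter (nk k) T x) @ \oo --> x)].

From HB Require Import structures.
From mathcomp Require Import all_boot all_order all_algebra.
From mathcomp Require Import all_classical all_reals all_analysis.
From mathcomp Require Import complex.
Import Order.TTheory GRing.Theory Num.Theory.
Import numFieldTopology.Exports.
Import ArrowAsProduct.
Local Open Scope classical_set_scope.
Local Open Scope ring_scope.
Set Implicit Arguments.
Unset Strict Implicit.
Unset Printing Implicit Defensive.

(* The vectors x with T^(n_k) x --> x form a linear subspace, since T is linear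
   and addition and scaling are continuous; it contains the dense set given by
   quasi-rigidity, and each of its vectors is recurrent.  A dense subset of a
   Hausdorff topological vector space over R or C contains n independent
   vectors whenever the space does, because linear independence is an open
   condition: if v is independent, sum_i c_i v_i stays away from 0 for c on the
   compact l1 unit sphere of K^n, hence, by the tube lemma, so does
   sum_i c_i w_i for every family w close enough to v. *)

Section sum_norm_sphere.
Variable K : numFieldType.

Lemma continuous_sum_norm n : continuous (fun c : 'I_n -> K => \sum_i `|c i|).
Proof.
apply: continuous_big => [|i _]; first exact: (@add_continuous K^o).
move=> c; apply: continuous_comp; first exact: proj_continuous.
exact: (@norm_continuous K K^o).
Qed.

Lemma compact_sum_norm_eq1 n (D : set K) :
  compact D -> [set z | `|z| <= 1] `<=` D ->
  compact [set c : 'I_n -> K | \sum_i `|c i| = 1].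
Proof.
move=> cD ballD; apply: (subclosed_compact _ (tychonoff (fun _ : 'I_n => cD))).
  apply: (@preimage_closed _ _ (fun c : 'I_n -> K => \sum_i `|c i|) [set 1]).
    by move=> c _; exact: continuous_sum_norm.
  exact/accessible_closed_set1/hausdorff_accessible/(@norm_hausdorff K K^o).
move=> c /= c1 i; apply: ballD; rewrite /= -c1 (bigD1 i) //= lerDl.
by rewrite sumr_ge0.
Qed.
End sum_norm_sphere.

Section lin_indep_normalize.
Variables (K : numFieldType) (X : lmodType K).

Lemma lin_indepN_sum_norm1 n (w : 'I_n -> X) : ~ lin_indep w ->
  exists2 c : 'I_n -> K, \sum_i `|c i| = 1 & \sum_i c i *: w i = 0.
Proof.
move=> /existsNP[c /not_implyP[cw0 /existsNP[i /eqP ci0]]].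
pose s := \sum_j `|c j|.
have s_gt0 : 0 < s.
  rewrite (lt_le_trans _ (_ : `|c i| <= s)) ?normr_gt0 //.
  by rewrite /s (bigD1 i) //= lerDl sumr_ge0.
exists (fun j => s^-1 * c j).
  under eq_bigr do rewrite normrM ger0_norm ?invr_ge0 ?ltW//.
  by rewrite -mulr_sumr mulVf ?gt_eqF.
under eq_bigr do rewrite -scalerA.
by rewrite -scaler_sumr cw0 scaler0.
Qed.
End lin_indep_normalize.

Section box_nbhs.
Context {I : eqType} {Y : topologicalType}.

Definition box_nbhs (v : I -> Y) : set_system (I -> Y) :=
  filter_from [set B | forall i, nbhs (v i) (B i)]
    (fun B => [set w | forall i, B i (w i)]).

Global Instance box_nbhs_filter v : Filter (box_nbhs v).
Proof.
apply: filter_from_filter; first by exists (fun=> setT) => i; exact: filterT.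
move=> B1 B2 B1v B2v; exists (fun i => B1 i `&` B2 i) => [i|w Bw].
  exact: filterI.
by split => i; have [] := Bw i.
Qed.

Lemma cvg_box_nbhs_proj v i : w i @[w --> box_nbhs v] --> v i.
Proof.
move=> U Uvi; exists (fun j => if j == i then U else setT) => [j|w /(_ i)].
  by case: eqP => [->//|_]; exact: filterT.
by rewrite eqxx.
Qed.
End box_nbhs.

Definition unit_ball_in_compact (K : numFieldType) :=
  exists2 D : set K, compact D & [set z | `|z| <= 1] `<=` D.

Section lin_indep_open.
Variables (K : numFieldType) (X : topologicalLmodType K).

Lemma cvg_lincomb (T : Type) (F : set_system T) n
    (a : T -> 'I_n -> K) (w : T -> 'I_n -> X) (c : 'I_n -> K) (v : 'I_n -> X) :
  Filter F -> (forall i, a t i @[t --> F] --> c i) ->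
  (forall i, w t i @[t --> F] --> v i) ->
  \sum_i a t i *: w t i @[t --> F] --> \sum_i c i *: v i.
Proof.
move=> FF ac wv; apply: cvg_big => [|i _]; first exact: add_continuous.
exact: cvg_comp _ _ (cvg_pair (ac i) (wv i)) (@scale_continuous K X (c i, v i)).
Qed.

Hypotheses (K_ball : unit_ball_in_compact K) (X_T1 : accessible_space X).

Lemma near_lin_indep n (F : set_system ('I_n -> X)) (v : 'I_n -> X) :
  Filter F -> (forall i, w i @[w --> F] --> v i) -> lin_indep v ->
  \forall w \near F, lin_indep w.
Proof.
move=> FF Fv v_indep; have [D cD ballD] := K_ball.
have /compact_near_coveringP S_cover := @compact_sum_norm_eq1 K n D cD ballD.
suff : \forall w \near F, [set c | \sum_i `|c i| = 1] `<=`
    [set c | \sum_i c i *: w i != 0].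
  apply: filterS => w Sw; apply: contrapT => /lin_indepN_sum_norm1[c c1 cw0].
  by move: (Sw c c1); rewrite /= cw0 eqxx.
apply: S_cover => c c1.
have cv_neq0 : \sum_i c i *: v i != 0.
  apply/eqP => /v_indep c0.
  have : \sum_i `|c i| = 0 by apply: big1 => i _; rewrite c0 normr0.
  by rewrite c1 => /eqP; rewrite oner_eq0.
have [A [oA Acv nA0]] := X_T1 cv_neq0; move: Acv nA0; rewrite !inE => Acv nA0.
pose G := filter_prod (nbhs c) F.
have fst_cvg i : (fun p : ('I_n -> K) * ('I_n -> X) => p.1 i) @ G --> c i.
  exact: (cvg_comp fst (proj i) (@cvg_fst _ _ _ F FF)
    (@proj_continuous _ _ i c)).
have snd_cvg i : (fun p : ('I_n -> K) * ('I_n -> X) => p.2 i) @ G --> v i.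
  exact: (cvg_comp snd (proj i) (@cvg_snd _ _ (nbhs c) F (nbhs_filter c))
    (Fv i)).
have GF : Filter G := filter_prod_filter (nbhs_filter c) FF.
have [[B1 B2] /= [cB1 FB2] B12] :=
  cvg_lincomb GF fst_cvg snd_cvg (open_nbhs_nbhs (conj oA Acv)).
exists (B1, B2) => // -[c' w] /= /(B12 (c', w)) /= Aw.
by apply/eqP => w0; apply: nA0; rewrite -w0.
Qed.

Lemma dense_infinite_dimensional (M : set X) :
  dense M -> infinite_dimensional [set: X] -> infinite_dimensional M.
Proof.
move=> dM infX n; have [v [_ v_indep]] := infX n.
have [B Bv B_indep] := near_lin_indep (box_nbhs_filter v)
  (@cvg_box_nbhs_proj _ _ v) v_indep.
have /choice[w Mw] : forall i, exists w, M w /\ B i w.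
  move=> i; move: (Bv i); rewrite nbhsE; case=> O [oO Ovi] OB.
  have [w [Ow Mw]] := dM O (ex_intro _ (v i) Ovi) oO.
  by exists w; split => //; exact: OB.
exists w; split => [i|]; first exact: (Mw i).1.
by apply: B_indep => i; exact: (Mw i).2.
Qed.
End lin_indep_open.

Section iter_linear.
Variables (K : pzRingType) (V : lmodType K) (T : {linear V -> V}).

Lemma iter_linear0 m : iter m T 0 = 0.
Proof. by elim: m => //= m ->; rewrite linear0. Qed.

Lemma iter_linearD m x y : iter m T (x + y) = iter m T x + iter m T y.
Proof. by elim: m => //= m ->; rewrite linearD. Qed.

Lemma iter_linearZ m a x : iter m T (a *: x) = a *: iter m T x.
Proof. by elim: m => //= m ->; rewrite linearZ. Qed.
End iter_linear.

Section rigid_vectors.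
Variables (K : numFieldType) (X : topologicalLmodType K).
Variables (T : {linear X -> X}) (nk : nat -> nat).

Definition rigid_vectors : set X :=
  [set x | iter (nk k) T x @[k --> \oo] --> x].

Lemma rigid_vectors_subspace : vector_subspace rigid_vectors.
Proof.
split => [|x y xT yT|a x xT]; rewrite /rigid_vectors /=.
- under eq_fun do rewrite iter_linear0; exact: cvg_cst.
- under eq_fun do rewrite iter_linearD.
  exact: cvg_comp _ _ (cvg_pair xT yT) (@add_continuous X (x, y)).
- under eq_fun do rewrite iter_linearZ.
  exact: cvg_comp _ _ (cvg_pair (cvg_cst a) xT) (scale_continuous (a, x)).
Qed.

Lemma rigid_vectors_sub_Rec :
  (forall k, 0 < nk k)%N -> rigid_vectors `<=` Rec T.
Proof.
move=> nk_gt0 x xT B /xT[N _ NB].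
exists (iter (nk N) T x); split; first by exists (nk N); [exact: nk_gt0|].
exact: NB N (leqnn N).
Qed.
End rigid_vectors.

Lemma denseS (Y : topologicalType) (A B : set Y) :
  A `<=` B -> dense A -> dense B.
Proof.
by move=> AB dA O O0 oO; have [x [Ox /AB Bx]] := dA O O0 oO; exists x.
Qed.

Lemma completely_metrizable_accessible (R : realType) (Y : topologicalType) :
  completely_metrizable R Y -> accessible_space Y.
Proof.
move=> [d [d_pos _ d_tri d_open _]] x y /eqP xy.
have dxx : d x x = 0 by apply/(d_pos x x).2.
have dxy : 0 < d x y.
  by rewrite lt_def (d_pos x y).1 andbT; apply/eqP => /(d_pos x y).2.
exists [set z | d x z < d x y]; split; rewrite ?inE /= ?dxx ?ltxx //.
apply/d_open => z /= xz; exists (d x y - d x z); first by rewrite subr_gt0.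
by move=> u /= zu; rewrite (le_lt_trans (d_tri x z u)) // -ltrBrDl.
Qed.

Lemma unit_ball_in_compact_real (R : realType) :
  unit_ball_in_compact (RC R true).
Proof.
exists `[-1, 1]%classic; first exact: segment_compact.
by move=> z /= z1; rewrite in_itv /= -ler_norml.
Qed.

Section complex_unit_ball.
Local Open Scope complex_scope.
Variable R : realType.

Lemma normc_real (x : R) : `|x%:C| = `|x|%:C.
Proof. by rewrite normc_def /= expr0n /= addr0 sqrtr_sqr. Qed.

Lemma normci : `|'i : R[i]| = 1.
Proof. by rewrite normc_def /= expr0n expr1n add0r sqrtr1. Qed.

Lemma continuous_real_complex :
  continuous (fun x : R => (x%:C : RC R false)).
Proof.
move=> x; apply/(@cvgrPdist_lt _ (RC R false)^o) => -[a b].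
rewrite ltcE /= => /andP[/eqP b0 a0]; near=> t.
rewrite -rmorphB normc_real b0 complexr0 ltcR.
by near: t; exists a.
Unshelve. all: by end_near.
Qed.

Lemma unit_ball_in_compact_complex : unit_ball_in_compact (RC R false).
Proof.
pose f (p : R * R) : RC R false := p.1%:C + 'i * p.2%:C.
exists (f @` (`[-1, 1] `*` `[-1, 1])).
  apply: continuous_compact; last first.
    by apply: compact_setX; exact: segment_compact.
  apply: continuous_subspaceT => p; apply: (@cvgD _ (RC R false)^o).
    exact: continuous_comp cvg_fst (@continuous_real_complex _).
  apply: cvgMl_tmp.
  exact: continuous_comp cvg_snd (@continuous_real_complex _).
move=> z z1; exists (complex.Re z, complex.Im z); last first.
  by rewrite /f /= [RHS]complexE.
split; rewrite /= in_itv /= -ler_norml -lecR (le_trans _ z1) //.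
  exact: normc_ge_Re.
by have := normc_ge_Re (z * 'i); rewrite ReiNIm normrN normrM normci mulr1.
Qed.
End complex_unit_ball.

Lemma unit_ball_in_compact_RC (R : realType) (b : bool) :
  unit_ball_in_compact (RC R b).
Proof.
case: b; first exact: unit_ball_in_compact_real.
exact: unit_ball_in_compact_complex.
Qed.

Theorem mainTheorem4 (R : realType) (b : bool) (X : topologicalLmodType (RC R b))
  (T : {linear X -> X}) :
  F_space X -> separable X -> infinite_dimensional [set: X] ->
  continuous T -> quasi_rigid T ->
  exists M : set X,
    [/\ vector_subspace M, dense M, infinite_dimensional M & M `<=` Rec T].
Proof.
move=> X_Fspace _ X_infdim _ [nk [Y [nk_gt0 _ Y_dense Y_rigid]]].
have M_dense : dense (rigid_vectors T nk) := denseS Y_rigid Y_dense.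
exists (rigid_vectors T nk); split => //.
- exact: rigid_vectors_subspace.
- apply: dense_infinite_dimensional M_dense X_infdim.
  + exact: unit_ball_in_compact_RC.
  + exact: completely_metrizable_accessible X_Fspace.
- exact: rigid_vectors_sub_Rec.
Qed.
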